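(* Let $\delta>0$ and let $\mathcal{G}$ be a class of graphs, each of average degree at least $2+\delta$, with unbounded girth. Let $\mathcal{A}$ be the class of all (unweighted) orientations of graphs in $\mathcal{G}$. Then $\mathcal{A}$ is not size-pliable.
   Context: An orientation of a graph is viewed as a structure over the signature $\{e\}$ with one binary symbol, where $e^{\mathbb{A}}(u,v)=1$ if $u\to v$ is an arc and $0$ otherwise. For structures $\mathbb{A},\mathbb{B}$ over a signature $\sigma$ (finite domain with functions $f^{\mathbb{A}}\colon A^{\mathrm{ar}(f)}\to\mathbb{Q}_{\ge0}$), $\mathrm{opt}(\mathbb{A},\mathbb{B})=\max_{h\colon A\to B}\sum_f\sum_{\bar x}f^{\mathbb{A}}(\bar x)f^{\mathbb{B}}(h(\bar x))$ over all maps, and $d_{\mathrm{opt}}(\mathbb{A},\mathbb{B})=\sup_{\mathbb{C}}|\ln\mathrm{opt}(\mathbb{A},\mathbb{C})-\ln\mathrm{opt}(\mathbb{B},\mathbb{C})|$ over all $\sigma$-structures $\mathbb{C}$ ($\ln0=-\infty$, $|\ln0-\ln0|=0$). A class $\mathcal{A}$ is size-pliable if for every $\varepsilon>0$ there is $k$ such that every $\mathbb{A}\in\mathcal{A}$ (signature $\sigma$) has a $\sigma$-structure $\mathbb{B}$ with domain of size at most $k$ and $d_{\mathrm{opt}}(\mathbb{A},\mathbb{B})\le\varepsilon$. *)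

From HB Require Import structures.
From mathcomp Require Import all_boot all_order all_algebra.
From mathcomp Require Import all_classical all_reals.
From mathcomp Require Import ereal exp.

Set Implicit Arguments.
Unset Strict Implicit.
Unset Printing Implicit Defensive.

Import Order.TTheory GRing.Theory Num.Theory.
Local Open Scope ring_scope.

Record struct := Struct {
  sdom : nat;
  srel : 'I_sdom -> 'I_sdom -> rat;
  srel_ge0 : forall u v, 0 <= srel u v }.

(* opt(A,B) = max over all maps h : A -> B of sum_{u,v} e^A(u,v) e^B(h u, h v).
   (If there is no map at all, i.e. B empty and A nonempty, the max is 0.) *)
Definition opt (A B : struct) : rat :=
  \big[Num.max/0]_(h : {ffun 'I_(sdom A) -> 'I_(sdom B)})
     \sum_(u : 'I_(sdom A)) \sum_(v : 'I_(sdom A))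
        @srel A u v * @srel B (h u) (h v).

(* |ln a - ln b| with ln 0 = -oo and |ln 0 - ln 0| = 0 *)
Definition lndist (R : realType) (a b : rat) : \bar R :=
  if (a == 0) && (b == 0) then 0%E
  else if (a == 0) || (b == 0) then +oo%E
  else (`| ln (ratr a : R) - ln (ratr b) |)%:E.

Definition dopt (R : realType) (A B : struct) : \bar R :=
  ereal_sup [set lndist R (opt A C) (opt B C) | C in [set: struct]].

Definition size_pliable (R : realType) (cls : struct -> Prop) : Prop :=
  forall eps : R, 0 < eps ->
  exists k : nat, forall A, cls A ->
    exists B : struct, (sdom B <= k)%N /\ (dopt R A B <= eps%:E)%E.

Record graph := Graph {
  gn : nat;
  gadj : rel 'I_gn;
  gadj_sym : symmetric gadj;
  gadj_irr : irreflexive gadj }.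

Definition gdeg (G : graph) (v : 'I_(gn G)) : nat := #|[set u | @gadj G v u]|.

Definition avg_degree (R : realType) (G : graph) : R :=
  (\sum_(v : 'I_(gn G)) gdeg v)%:R / (gn G)%:R.

Definition girth_ge (G : graph) (g : nat) : Prop :=
  forall s : seq 'I_(gn G), uniq s -> (3 <= size s)%N -> cycle (@gadj G) s ->
    (g <= size s)%N.

Definition unbounded_girth (cG : graph -> Prop) : Prop :=
  forall g : nat, exists G, cG G /\ girth_ge G g.

Definition is_orientation (G : graph) (o : rel 'I_(gn G)) : Prop :=
  forall u v, @gadj G u v = o u v || o v u /\ ~~ (o u v && o v u).

Lemma orient_ge0 n (o : rel 'I_n) u v : 0 <= ((o u v)%:R : rat).
Proof. exact: ler0n. Qed.

Definition struct_of_rel n (o : rel 'I_n) : struct :=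
  @Struct n (fun u v => (o u v)%:R) (@orient_ge0 n o).

Definition orientations_of (cG : graph -> Prop) (A : struct) : Prop :=
  exists G : graph, cG G /\
  exists o : rel 'I_(gn G), is_orientation o /\ A = struct_of_rel o.

From mathcomp Require Import all_boot all_order all_algebra.
From mathcomp Require Import zify ring lra.
From mathcomp Require Import reals ereal sequences exp.

Set Implicit Arguments.
Unset Strict Implicit.
Unset Printing Implicit Defensive.

Import Order.TTheory GRing.Theory Num.Theory.

(* Suppose the orientations were size-pliable and let A be an orientation of a
   graph G of the class, of girth larger than the bound k, and B a structure on
   at most k points with d_opt(A, B) <= eps.  Any map from B into A hits fewer
   vertices than the girth of G, i.e. a forest, and an oriented forest maps
   arc-preservingly onto the directed triangle C3; so opt(B, A) <= opt(B, C3).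
   On the other hand, counting shows that some orientation A of G is far from
   C3: every labelling V -> Z/3 breaks at least m / 16q^2 of its m arcs, where
   q n <= (q - 1) m follows from the average degree bound.  Indeed, such a
   labelling is determined, up to shifts on components, by one bit per vertex,
   so an orientation with a good labelling is described by the set of broken
   arcs, their directions and n bits, and there are fewer than 2^m such
   descriptions.  Then
     m <= opt(A, A) <= e^eps opt(B, A) <= e^eps opt(B, C3)
       <= e^(2 eps) opt(A, C3) <= (1 + 1/M) (1 - 1/M) m < m. *)

Section Girth.
Variable G : graph.
Local Notation V := 'I_(gn G).
Local Notation adj := (@gadj G).

Definition path_in (I : {set V}) (s : seq V) :=
  [&& uniq s, all (mem I) s & if s is x :: p then path adj x p else false].

Lemma size_path_in I s : path_in I s -> size s <= #|I|.
Proof.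
case/and3P=> us /allP sI _; rewrite cardE.
by apply: uniq_leq_size => // x xs; rewrite mem_enum; exact: sI.
Qed.

Lemma longest_path_in (I : {set V}) : I != set0 ->
  exists x p, path_in I (x :: p) /\ forall s, path_in I s -> size s <= (size p).+1.
Proof.
case/set0Pn=> x0 x0I.
pose P n := [exists t : n.-tuple V, path_in I t].
have P1 : P 1 by apply/existsP; exists [tuple x0]; rewrite /path_in /= x0I.
have Pbound n : P n -> n <= #|I|.
  by case/existsP=> t /size_path_in; rewrite size_tuple.
have [n /existsP[t It] nmax] := ex_maxnP (ex_intro P 1 P1) Pbound.
have longest s : path_in I s -> size s <= size t.
  by move=> Is; rewrite size_tuple nmax //; apply/existsP; exists (in_tuple s).
by move: It longest; case: (tval t) => [|x p] // It longest; exists x, p.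
Qed.

Variable g : nat.
Hypothesis girthG : girth_ge G g.

Lemma path_in_no_chord (I : {set V}) x z p w : #|I| < g ->
  path_in I [:: x, z & p] -> w \in p -> ~~ adj x w.
Proof.
move=> Ig Ixp wp; move: Ixp; case/path.splitP: wp => p1 p2 /and3P[uxp Ixp pxp].
apply/negP=> axw.
pose c := [:: x, z & rcons p1 w].
have ec : [:: x, z & rcons p1 w ++ p2] = c ++ p2 by [].
have uc : uniq c by move: uxp; rewrite ec cat_uniq => /andP[].
have pc : path adj x (z :: rcons p1 w).
  by move: pxp; rewrite -cat_cons cat_path => /andP[].
have cc : cycle adj c.
  by rewrite /c /cycle rcons_path pc /= last_rcons (@gadj_sym G).
have Ic : path_in I c.
  apply/and3P; split=> //; apply/allP=> v vc; apply: (allP Ixp).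
  by rewrite ec mem_cat vc.
have c3 : 2 < size c by rewrite /c /= size_rcons.
by move: (leq_trans (girthG uc c3 cc) (size_path_in Ic)); rewrite leqNgt Ig.
Qed.

(* The first vertex of a longest path in I: another neighbour in I would either
   extend the path or close a cycle shorter than g. *)
Lemma small_set_leaf (I : {set V}) : I != set0 -> #|I| < g ->
  exists2 x, x \in I & exists z, {in I, forall y, adj x y -> y = z}.
Proof.
move=> I0 Ig; have [x [p [Ixp longest]]] := longest_path_in I0.
have xI : x \in I by case/and3P: Ixp => _ /allP/(_ x (mem_head x p)).
exists x => //.
have in_path w : w \in I -> adj x w -> w \in p.
  move=> wI axw; have wx : w != x by apply: contraTneq axw => ->; rewrite (@gadj_irr G).
  apply/negPn/negP=> wp; case/and3P: Ixp => uxp Ixp pxp.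
  have: path_in I [:: w, x & p].
    apply/and3P; split; first by rewrite cons_uniq inE negb_or wx wp.
    - by move: Ixp; rewrite /= wI.
    - by rewrite /= (@gadj_sym G) axw.
  by move/longest; rewrite ltnn.
case: p Ixp longest in_path => [|z p] Ixp _ in_path.
  by exists x => y yI /(in_path y yI).
exists z => y yI axy; move: (in_path y yI axy); rewrite inE => /orP[/eqP //|yp].
by move: axy; rewrite (negPf (path_in_no_chord Ig Ixp yp)).
Qed.

End Girth.

Section Orientation.
Variables (G : graph) (o : rel 'I_(gn G)).
Hypothesis oG : is_orientation o.
Local Notation V := 'I_(gn G).

Lemma orientation_adj u v : o u v -> gadj u v.
Proof. by move=> ouv; case: (oG u v) => -> _; rewrite ouv. Qed.

Lemma orientation_asym u v : o u v -> ~~ o v u.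
Proof. by move=> ouv; case: (oG u v) => _; rewrite ouv. Qed.

Lemma orientation_irr u : ~~ o u u.
Proof. by apply: contraFN (@gadj_irr G u) => /orientation_adj. Qed.

Definition Z3_potential (I : {set V}) (f : V -> 'Z_3) :=
  {in I &, forall x y, o x y -> f y = (f x + 1)%R}.

Lemma small_set_Z3_potential g (I : {set V}) : girth_ge G g -> #|I| < g ->
  exists f, Z3_potential I f.
Proof.
move=> gG; move eI: #|I| => n; elim: n I eI => [|n IH] I eI Ig.
  by exists (fun=> 0%R) => x y; rewrite (card0_eq eI).
have I0 : I != set0 by rewrite -card_gt0 eI.
have := small_set_leaf gG I0; rewrite eI => /(_ Ig)[x xI [z xleaf]].
have [f fpot] : exists f, Z3_potential (I :\ x) f.
  by apply: IH (ltnW Ig); move: eI; rewrite (cardsD1 x) xI add1n => -[].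
exists (fun v => if v == x then (if o z x then f z + 1 else f z - 1)%R else f v).
move=> u v uI vI ouv.
have [ux|ux] := eqVneq u x; have [vx|vx] := eqVneq v x.
- by move: ouv; rewrite ux vx (negPf (orientation_irr x)).
- have vz : v = z by apply: xleaf; rewrite // -ux (orientation_adj ouv).
  by rewrite -ux -vz (negPf (orientation_asym ouv)) subrK.
- have uz : u = z by apply: xleaf; rewrite // (@gadj_sym G) -vx (orientation_adj ouv).
  by rewrite -uz -vx ouv.
- by apply: fpot; rewrite // !inE ?ux ?vx.
Qed.

End Orientation.

Section RootedLabellings.
Variables (T : finType) (r : rel T).
Hypothesis r_sym : symmetric r.
Local Notation root := (fingraph.root r).

Lemma exists_path_to_root x :
  exists n, [exists t : n.-tuple T, path r x t && (last x t == root x)].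
Proof.
have /connectP[p rp lp] := connect_root r x.
by exists (size p); apply/existsP; exists (in_tuple p); rewrite /= rp -lp eqxx.
Qed.

Definition root_dist x := ex_minn (exists_path_to_root x).

Definition parent x := odflt x [pick y | r x y && (root_dist y < root_dist x)].

Lemma parentP x : root x != x -> r x (parent x) && (root_dist (parent x) < root_dist x).
Proof.
move=> xroot; rewrite /parent; case: pickP => [y -> // | noy]; exfalso.
move: noy; rewrite {2}/root_dist; case: ex_minnP => n /existsP[t /andP[xt lt]] nmin.
case: t (size_tuple t) xt lt => -[|y t'] //= _ <-.
  by move=> _ /eqP ex; rewrite -ex eqxx in xroot.
case/andP=> xy yt' lt' /(_ y); rewrite /= xy /= => /negP; apply.
have ry : root y = root x.
  by apply/esym/(fingraph.rootP (sym_connect_sym r_sym)); exact: connect1.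
rewrite /root_dist; case: ex_minnP => k _ kmin; apply: kmin.
by apply/existsP; exists (in_tuple t'); rewrite /= yt' ry lt'.
Qed.

Definition rooted_labelling (f : {ffun T -> 'Z_3}) :=
  [forall x, (root x == x) ==> (f x == 0%R)] &&
  [forall x, forall y, r x y ==> (f y == f x + 1)%R || (f x == f y + 1)%R].

(* Labels vanish at the roots and change by +-1 along r, so a rooted labelling
   is determined by the bits telling whether a label exceeds its parent's. *)
Lemma rooted_labelling_inj f1 f2 : rooted_labelling f1 -> rooted_labelling f2 ->
  (forall x, (f1 x == f1 (parent x) + 1)%R = (f2 x == f2 (parent x) + 1)%R) ->
  f1 = f2.
Proof.
case/andP=> /forallP root1 /forallP step1 /andP[/forallP root2 /forallP step2] same_bits.
apply/ffunP=> x; move: {2}(root_dist x).+1 (ltnSn (root_dist x)) => k.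
elim: k x => [//|k IH] x xk.
have [/eqP xroot | xroot] := eqVneq (root x) x.
  by rewrite (eqP (implyP (root1 x) xroot)) (eqP (implyP (root2 x) xroot)).
have /andP[xp px] := parentP xroot.
have := same_bits x; have := implyP (forallP (step1 x) (parent x)) xp.
have := implyP (forallP (step2 x) (parent x)) xp.
have : f1 (parent x) = f2 (parent x) by apply: IH; apply: leq_trans px _.
move: (parent x) => p ->.
case: (boolP (f1 x == f2 p + 1)%R) => [/eqP -> _ _ /esym/eqP -> // | _].
rewrite orbF => /orP[/eqP s2 /eqP s1 _ | /eqP -> _]; last by rewrite eqxx.
by apply: (@addIr _ 1%R); rewrite -s1 -s2.
Qed.

Lemma card_rooted_labellings : #|[set f | rooted_labelling f]| <= 2 ^ #|T|.
Proof.
pose bits (f : {ffun T -> 'Z_3}) := [ffun x => (f x == f (parent x) + 1)%R].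
rewrite -(@card_in_imset _ _ bits); last first.
  move=> f1 f2; rewrite !inE => rf1 rf2 /ffunP eq_bits.
  by apply: rooted_labelling_inj => // x; move: (eq_bits x); rewrite !ffunE.
by rewrite (leq_trans (max_card _)) // card_ffun card_bool.
Qed.

End RootedLabellings.

Section Edges.
Variable G : graph.
Local Notation V := 'I_(gn G).
Local Notation adj := (@gadj G).

Definition gedge := {p : V * V | adj p.1 p.2 && (p.1 < p.2)}.

Lemma gedge_adj (e : gedge) : adj (val e).1 (val e).2.
Proof. by case: e => -[a b] /= /andP[]. Qed.

Lemma gedge_lt (e : gedge) : (val e).1 < (val e).2.
Proof. by case: e => -[a b] /= /andP[]. Qed.

Definition joins (e : gedge) (u v : V) := (val e == (u, v)) || (val e == (v, u)).

Lemma joins_sym e u v : joins e u v = joins e v u.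
Proof. exact: orbC. Qed.

Lemma joins_inj e1 e2 u v : joins e1 u v -> joins e2 u v -> e1 = e2.
Proof.
have l1 := gedge_lt e1; have l2 := gedge_lt e2.
by case/orP=> /eqP e1uv /orP[] /eqP e2uv; apply: val_inj; rewrite e1uv e2uv //;
  move: l1 l2; rewrite e1uv e2uv /=; lia.
Qed.

Lemma adj_joins u v : adj u v -> exists e, joins e u v.
Proof.
move=> auv; have [uv|vu|/val_inj euv] := ltngtP u v.
- have uvE : adj u v && (u < v) by rewrite auv uv.
  by exists (exist _ (u, v) uvE); rewrite /joins eqxx.
- have vuE : adj v u && (v < u) by rewrite (@gadj_sym G) auv vu.
  by exists (exist _ (v, u) vuE); rewrite /joins eqxx orbT.
- by move: auv; rewrite euv (@gadj_irr G).
Qed.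

Lemma joins_adj e u v : joins e u v -> adj u v.
Proof.
by case/orP=> /eqP euv; have := gedge_adj e; rewrite euv // (@gadj_sym G).
Qed.

Definition edge_arc (s : {ffun gedge -> bool}) e : V * V :=
  if s e then val e else ((val e).2, (val e).1).

Lemma joins_edge_arc s e : joins e (edge_arc s e).1 (edge_arc s e).2.
Proof.
by rewrite /joins /edge_arc; case: (s e) => /=; rewrite -surjective_pairing eqxx ?orbT.
Qed.

Lemma edge_arc_inj s : injective (edge_arc s).
Proof.
move=> e1 e2 arc12; apply: joins_inj (joins_edge_arc s e1) _.
by rewrite arc12 joins_edge_arc.
Qed.

Definition bits_orientation s : rel V := fun u v => [exists e, edge_arc s e == (u, v)].

Lemma bits_orientationP s : is_orientation (bits_orientation s).
Proof.
have arc_joins e u v : edge_arc s e = (u, v) -> joins e u v.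
  by move=> euv; have := joins_edge_arc s e; rewrite euv.
move=> u v; split.
  apply/idP/orP => [/adj_joins[e /orP[]/eqP ev] | [] /existsP[e /eqP/arc_joins]].
  - by case se: (s e); [left | right]; apply/existsP; exists e; rewrite /edge_arc se ev.
  - by case se: (s e); [right | left]; apply/existsP; exists e; rewrite /edge_arc se ev.
  - exact: joins_adj.
  - by rewrite joins_sym; exact: joins_adj.
apply/andP=> -[/existsP[e1 /eqP a1] /existsP[e2 /eqP a2]].
have e12 : e1 = e2.
  by apply: joins_inj (arc_joins _ _ _ a1) _; rewrite joins_sym; exact: arc_joins.
have := joins_adj (arc_joins _ _ _ a1); rewrite e12 a2 in a1; case: a1 => -> _.
by rewrite (@gadj_irr G).
Qed.

Lemma big_bits_orientation (R : Type) (idx : R) (op : Monoid.com_law idx) s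
    (F : V -> V -> R) :
  \big[op/idx]_u \big[op/idx]_(v | bits_orientation s u v) F u v =
  \big[op/idx]_e F (edge_arc s e).1 (edge_arc s e).2.
Proof.
rewrite pair_big_dep (eq_bigl (mem (edge_arc s @: [set: gedge]))) => [|[u v]] /=.
  rewrite big_imset => [|e1 e2 _ _ /edge_arc_inj //].
  by apply: eq_bigl => e; rewrite in_setT.
by apply/existsP/imsetP => [[e /eqP <-] | [e _ ->]]; exists e; rewrite ?in_setT.
Qed.

Lemma sum_gdeg : \sum_(v : V) gdeg v = 2 * #|{: gedge}|.
Proof.
pose o := bits_orientation [ffun=> true].
have arcs : \sum_u \sum_(v | o u v) 1 = #|{: gedge}|.
  by rewrite big_bits_orientation sum1_card.
rewrite mul2n -addnn -{1}arcs -[in RHS]arcs [X in _ + X](exchange_big_dep predT) //=.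
rewrite -big_split /=.
apply: eq_bigr => v _; rewrite /gdeg -sum1dep_card big_mkcond.
rewrite [in RHS]big_mkcond [X in _ + X]big_mkcond -big_split; apply: eq_bigr => u _ /=.
have [-> /negP] := bits_orientationP [ffun=> true] v u.
by rewrite -/o; case: (o v u); case: (o u v).
Qed.

Definition respects s (f : V -> 'Z_3) e :=
  (f (edge_arc s e).2 == f (edge_arc s e).1 + 1)%R.

Definition violated s f := [set e | ~~ respects s f e].

Lemma respects_joins s f e u v : joins e u v -> respects s f e ->
  (f v == f u + 1)%R || (f u == f v + 1)%R.
Proof.
rewrite /respects /edge_arc; case: (s e) => /orP[] /eqP -> //= ->; by rewrite ?orbT.
Qed.

End Edges.

Lemma card_pairs (I J : finType) (P : I -> J -> bool) :
  #|[set p : I * J | P p.1 p.2]| = \sum_i #|[set j | P i j]|.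
Proof.
rewrite -sum1dep_card -(pair_big_dep predT (fun i j => P i j) (fun _ _ => 1)) /=.
by apply: eq_bigr => i _; rewrite sum1dep_card.
Qed.

Lemma Z3_succ_asym (a b : 'Z_3) : (a == b + 1)%R -> (b == a + 1)%R = false.
Proof. by case: a b => -[|[|[|]]] // ? [[|[|[|]]] ?]. Qed.

Section NearlyZ3Orientations.
Variable G : graph.
Local Notation V := 'I_(gn G).
Local Notation E := (gedge G).
Local Notation m := #|{: E}|.

Definition kept_rel (L : {set E}) : rel V :=
  fun x y => [exists e, (e \notin L) && joins e x y].

Lemma kept_rel_sym L : symmetric (kept_rel L).
Proof. by move=> x y; apply: eq_existsb => e; rewrite joins_sym. Qed.

(* The code (L, T, f) stands for the orientation which, on the edges of L,
   follows the vertex order exactly on T and, off L, goes from label a to a + 1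
   of f.  Normalising f on the components of the edges outside L makes it a
   rooted labelling, whence at most 2^n labels per (L, T). *)
Definition code := ({set E} * {set E} * {ffun V -> 'Z_3})%type.

Definition decode (c : code) : {ffun E -> bool} :=
  [ffun e => if e \in c.1.1 then e \in c.1.2
              else (c.2 (val e).2 == c.2 (val e).1 + 1)%R].

Definition codes M := [set c : code |
  [&& M * #|c.1.1| < m, c.1.2 \subset c.1.1 & rooted_labelling (kept_rel c.1.1) c.2]].

Lemma nearly_Z3_decode M :
  [set s | [exists f : {ffun V -> 'Z_3}, M * #|violated s f| < m]]
    \subset decode @: codes M.
Proof.
apply/subsetP=> s; rewrite inE => /existsP[f Mf].
set L := violated s f; set rt := fingraph.root (kept_rel L).
pose f' := [ffun x => f x - f (rt x)]%R.
have same_root e : e \notin L -> rt (val e).1 = rt (val e).2.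
  move=> eL; apply/(fingraph.rootP (sym_connect_sym (@kept_rel_sym L))); apply: connect1.
  by apply/existsP; exists e; rewrite eL /joins -surjective_pairing eqxx.
have shift a b : rt a = rt b -> (f' b == f' a + 1)%R = (f b == f a + 1)%R.
  by move=> rab; rewrite !ffunE rab addrAC; apply/eqP/eqP => [/addIr | ->].
apply/imsetP; exists ((L, [set e in L | s e]), f'); last first.
  apply/ffunP=> e; rewrite /decode ffunE /=; case: ifP => [eL | /negbT eL].
    by rewrite inE eL.
  rewrite shift ?same_root //; move: eL; rewrite inE negbK /respects /edge_arc.
  by case: (s e) => /= [-> | /Z3_succ_asym ->].
rewrite inE /= Mf /=; apply/andP; split.
  by apply/subsetP=> e; rewrite inE => /andP[].
apply/andP; split.
  by apply/forallP=> x; apply/implyP=> /eqP rx; rewrite ffunE /rt rx subrr.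
apply/forallP=> x; apply/forallP=> y; apply/implyP=> /existsP[e /andP[eL jxy]].
have rxy : rt x = rt y.
  by case/orP: jxy (same_root e eL) => /eqP -> //= /esym.
rewrite (shift x y rxy) (shift y x (esym rxy)); apply: (respects_joins (s := s) jxy).
by move: eL; rewrite inE negbK.
Qed.

Lemma card_codes M :
  #|codes M| <= (\sum_(L : {set E} | M * #|L| < m) 2 ^ #|L|) * 2 ^ gn G.
Proof.
pose small (L T : {set E}) := (M * #|L| < m) && (T \subset L).
have labellings LT :
    #|[set f | small LT.1 LT.2 && rooted_labelling (kept_rel LT.1) f]|
      <= small LT.1 LT.2 * 2 ^ gn G.
  case: (small _ _) => /=; last first.
    by rewrite mul0n leqn0; apply/eqP/eq_card0 => f; rewrite inE.
  rewrite mul1n -[X in 2 ^ X]card_ord.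
  exact: card_rooted_labellings (@kept_rel_sym LT.1).
have pairs : \sum_(LT : {set E} * {set E}) small LT.1 LT.2 =
               \sum_(L : {set E} | M * #|L| < m) 2 ^ #|L|.
  rewrite -(pair_big predT predT (fun L T => nat_of_bool (small L T))) /= [RHS]big_mkcond /=.
  apply: eq_bigr => L _; case: ifP => ML; last by rewrite big1 // => T _; rewrite /small ML.
  rewrite -card_powerset -sum1_card [RHS]big_mkcond; apply: eq_bigr => T _.
  by rewrite /small ML powersetE.
have -> : codes M =
    [set c : code | small c.1.1 c.1.2 && rooted_labelling (kept_rel c.1.1) c.2].
  by apply/setP=> c; rewrite !inE andbA.
rewrite (card_pairs (fun LT f => small LT.1 LT.2 && rooted_labelling (kept_rel LT.1) f)).
by rewrite -pairs big_distrl /=; apply: leq_sum => LT _; exact: labellings.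
Qed.

End NearlyZ3Orientations.

Lemma sum_subsets_pow (E : finType) K :
  \sum_(L : {set E}) 2 ^ #|L| * K ^ (#|E| - #|L|) = (K + 2) ^ #|E|.
Proof.
have -> : (K + 2) ^ #|E| = \prod_(e : E) \sum_(b : bool) (if b then 2 else K).
  by rewrite -prod_nat_const; apply: eq_bigr => e _; rewrite big_bool addnC.
rewrite bigA_distr_bigA /= (reindex (fun g : {ffun E -> bool} => [set e | g e])) /=.
  apply: eq_bigr => g _; rewrite [RHS](bigID g) /= (eq_bigr (fun=> 2)) => [|e -> //].
  rewrite [X in _ = _ * X](eq_bigr (fun=> K)) => [|e /negPf -> //].
  rewrite !prod_nat_const -(cardsC [set e | g e]) addKn; congr (2 ^ _ * K ^ _).
    by apply: eq_card => e; rewrite inE.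
  by apply: eq_card => e; rewrite !inE.
exists (fun L : {set E} => [ffun e => e \in L]) => [g _ | L _].
  by apply/ffunP => e; rewrite ffunE inE.
by apply/setP => e; rewrite inE ffunE.
Qed.

Lemma small_subsets_bound (E : finType) K T : 0 < K ->
  K ^ #|E| * \sum_(L : {set E} | #|L| <= T) 2 ^ #|L| <= K ^ T * (K + 2) ^ #|E|.
Proof.
move=> K0; rewrite -sum_subsets_pow !big_distrr /=.
rewrite [X in _ <= X](bigID (fun L : {set E} => #|L| <= T)) /=.
apply: leq_trans (leq_addr _ _); apply: leq_sum => L LT.
have -> : K ^ #|E| = K ^ (#|E| - #|L|) * K ^ #|L| by rewrite -expnD subnK ?max_card.
by rewrite -mulnA [2 ^ _ * _]mulnC mulnCA leq_mul ?leq_pexp2l.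
Qed.

Lemma Bernoulli_bound N K : 2 * N + 2 <= K -> (K + 2) ^ N * (K - 2 * N) <= K ^ N.+1.
Proof.
elim: N => [|N IH] NK; first by rewrite expn0 mul1n muln0 subn0 expn1.
have step : (K + 2) * (K - 2 * N.+1) <= K * (K - 2 * N) by nia.
rewrite expnS (expnS K) -mulnA mulnCA.
apply: leq_trans (leq_mul (leqnn _) step) _.
by rewrite mulnCA leq_mul2l IH ?orbT //; lia.
Qed.

Lemma expn_add2_le N K : 4 * N <= K -> (K + 2) ^ N <= 2 * K ^ N.
Proof.
case: N => [|N] NK; first by rewrite !expn0.
have K0 : 0 < K by lia.
rewrite -(@leq_pmul2r K) // -mulnA -expnSr.
apply: leq_trans (_ : _ <= 2 * ((K + 2) ^ N.+1 * (K - 2 * N.+1))) _.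
  by rewrite mulnCA leq_mul2l; apply/orP; right; lia.
by rewrite leq_mul2l Bernoulli_bound ?orbT //; lia.
Qed.

Lemma expn_le_pow2 K e : K ^ e <= 2 ^ (K * e).
Proof.
case: e => [|e]; first by rewrite muln0.
by rewrite expnM leq_exp2r // ltnW // ltn_expl.
Qed.

Lemma small_subsets_count (E : finType) n q : 0 < q -> 0 < #|E| ->
  q * n <= (q - 1) * #|E| ->
  (\sum_(L : {set E} | 2 * q * (8 * q) * #|L| < #|E|) 2 ^ #|L|) * 2 ^ n < 2 ^ #|E|.
Proof.
(* Raise to the power N = 2q: with K = 8q = 4N, (K + 2)^N <= 2 K^N and
   K^N <= 2^(N K), while |L| <= (m - 1) / (N K). *)
move=> q0 m0 qn; set m := #|E| in m0 qn *.
have qm : m <= q * m by rewrite leq_pmull.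
have nq : n * (2 * q) <= (2 * q - 2) * m by move: qn; rewrite !mulnBl; lia.
have mq : m - 1 + m + (2 * q - 2) * m < m * (2 * q) by rewrite mulnBl; lia.
set N := 2 * q in nq mq *; set K := 8 * q; set S := \sum_(L | _) _.
have K0 : 0 < K by lia.
pose T := (m - 1) %/ (N * K).
have small_le : S <= \sum_(L : {set E} | #|L| <= T) 2 ^ #|L|.
  rewrite /S big_mkcond [X in _ <= X]big_mkcond; apply: leq_sum => L _.
  by case: ifP => // ML; rewrite ifT // leq_divRL ?muln_gt0 //; lia.
have aT : K ^ (T * N) <= 2 ^ (m - 1).
  apply: leq_trans (expn_le_pow2 _ _) _; rewrite leq_exp2l //.
  by apply: leq_trans (leq_divM (m - 1) (N * K)); lia.
have aK : (K + 2) ^ (m * N) <= 2 ^ m * K ^ (m * N).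
  rewrite (mulnC m) (expnM (K + 2)) (expnM K) -expnMn leq_exp2r // expn_add2_le //.
  by rewrite /N /K; lia.
have an : 2 ^ (n * N) <= 2 ^ ((N - 2) * m) by rewrite leq_exp2l.
have key : K ^ T * (K + 2) ^ m * 2 ^ n < 2 ^ m * K ^ m.
  rewrite -(@ltn_exp2r _ _ N) ?muln_gt0 // (expnMn (K ^ T * _)) (expnMn (K ^ T)).
  rewrite (expnMn (2 ^ m)) -!expnM.
  apply: leq_ltn_trans (leq_mul (leq_mul aT aK) an) _.
  by rewrite mulnA -expnD mulnAC -expnD ltn_pmul2r ?expn_gt0 ?K0 // ltn_exp2l.
have SK : K ^ m * S <= K ^ T * (K + 2) ^ m.
  by apply: leq_trans _ (small_subsets_bound E T K0); rewrite leq_mul2l small_le orbT.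
rewrite -(@ltn_pmul2l (K ^ m)) ?expn_gt0 ?K0 // mulnA (mulnC _ (2 ^ m)).
by apply: leq_ltn_trans key; rewrite leq_mul2r SK orbT.
Qed.

Lemma exists_far_from_Z3_orientation (G : graph) q : 0 < q -> 0 < #|{: gedge G}| ->
  q * gn G <= (q - 1) * #|{: gedge G}| ->
  exists s, forall f : {ffun 'I_(gn G) -> 'Z_3},
    #|{: gedge G}| <= 2 * q * (8 * q) * #|violated s f|.
Proof.
move=> q0 m0 qn.
set bad := [set s | [exists f : {ffun 'I_(gn G) -> 'Z_3},
                       2 * q * (8 * q) * #|violated s f| < #|{: gedge G}|]].
have bad_lt : #|bad| < #|{: {ffun gedge G -> bool}}|.
  rewrite card_ffun card_bool; apply: leq_ltn_trans (small_subsets_count q0 m0 qn).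
  apply: leq_trans (subset_leq_card (nearly_Z3_decode _ _)) _.
  exact: leq_trans (leq_imset_card _ _) (card_codes _ _).
have /card_gt0P[s] : 0 < #|~: bad| by rewrite cardsCs setCK subn_gt0.
by rewrite !inE negb_exists => /forallP good; exists s => f; rewrite leqNgt good.
Qed.

Local Open Scope ring_scope.

Definition map_value (A B : struct) (h : {ffun 'I_(sdom A) -> 'I_(sdom B)}) : rat :=
  \sum_u \sum_v @srel A u v * @srel B (h u) (h v).

Arguments map_value : clear implicits.

Lemma map_value_le_opt A B h : map_value A B h <= opt A B.
Proof. exact: (le_bigmax _ (map_value A B) h). Qed.

Lemma opt_ge0 A B : 0 <= opt A B.
Proof. exact: bigmax_ge_id. Qed.

Lemma opt_le A B (x : rat) : 0 <= x -> (forall h, map_value A B h <= x) -> opt A B <= x.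
Proof. by move=> x0 hx; apply: bigmax_le => // h _; exact: hx. Qed.

Lemma map_value_struct_of_rel n (o : rel 'I_n) B h :
  map_value (struct_of_rel o) B h = \sum_u \sum_(v | o u v) @srel B (h u) (h v).
Proof.
apply: eq_bigr => u _; rewrite [RHS]big_mkcond; apply: eq_bigr => v _ /=.
by case: (o u v); rewrite ?mul1r ?mul0r.
Qed.

Definition dicycle3 := struct_of_rel (fun i j : 'I_3 => (j : 'Z_3) == (i : 'Z_3) + 1).

Section OrientationValues.
Variable G : graph.
Local Notation V := 'I_(gn G).
Local Notation m := #|{: gedge G}|.

Lemma bits_orientation_arc (s : {ffun gedge G -> bool}) e :
  bits_orientation s (edge_arc s e).1 (edge_arc s e).2.
Proof. by apply/existsP; exists e; rewrite -surjective_pairing. Qed.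

Lemma opt_bits_orientation_self (s : {ffun gedge G -> bool}) :
  m%:R <= opt (struct_of_rel (bits_orientation s)) (struct_of_rel (bits_orientation s)).
Proof.
set A := struct_of_rel (bits_orientation s).
apply: le_trans _ (map_value_le_opt (A := A) (B := A) [ffun x => x]).
rewrite map_value_struct_of_rel big_bits_orientation.
rewrite (eq_bigr (fun=> 1)) => [|e _]; first by rewrite sumr_const.
by rewrite /= !ffunE bits_orientation_arc.
Qed.

Lemma opt_bits_orientation_dicycle3 (s : {ffun gedge G -> bool}) M : (0 < M)%N ->
  (forall f : {ffun V -> 'Z_3}, m <= M * #|violated s f|)%N ->
  opt (struct_of_rel (bits_orientation s)) dicycle3 <= m%:R - m%:R / M%:R.
Proof.
move=> M0 far; have M0' : 0 < M%:R :> rat by rewrite ltr0n.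
apply: opt_le => [|h]; first by rewrite subr_ge0 ler_pdivrMr // ler_peMr // ler1n.
have -> : map_value _ _ h = (m - #|violated s h|)%:R.
  rewrite map_value_struct_of_rel big_bits_orientation -(cardsC (violated s h)) addKn.
  rewrite -sum1_card [in RHS]big_mkcond natr_sum; apply: eq_bigr => e _ /=.
  by rewrite !inE negbK /respects; case: (_ == _).
rewrite natrB ?max_card // lerD2l lerN2 ler_pdivrMr // -natrM ler_nat mulnC.
exact: far.
Qed.

(* The image of a map from B spans fewer than g vertices of G, hence carries a
   Z_3 potential of o. *)
Lemma opt_le_dicycle3 g (o : rel V) (B : struct) : girth_ge G g -> is_orientation o ->
  (sdom B < g)%N -> opt B (struct_of_rel o) <= opt B dicycle3.
Proof.
move=> gG oG Bg; apply: opt_le => [|h]; first exact: opt_ge0.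
have hI : (#|h @: setT| < g)%N.
  by apply: leq_ltn_trans (leq_imset_card _ _) _; rewrite cardsT card_ord.
have [f fpot] := small_set_Z3_potential oG gG hI.
pose h3 := [ffun x => f (h x) : 'I_3].
apply: le_trans _ (map_value_le_opt (A := B) (B := dicycle3) h3).
apply: ler_sum => u _; apply: ler_sum => v _; rewrite /= !ffunE.
apply: ler_wpM2l; first exact: srel_ge0.
rewrite ler_nat; case ouv: (o (h u) (h v)) => //.
by rewrite (fpot _ _ (imset_f _ (in_setT u)) (imset_f _ (in_setT v)) ouv) eqxx.
Qed.

End OrientationValues.

Lemma lndistC (R : realType) a b : lndist R a b = lndist R b a.
Proof. by rewrite /lndist andbC orbC distrC. Qed.

Lemma lndist_le_expR (R : realType) (eps : R) (a b : rat) : 0 <= a -> 0 <= b ->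
  (lndist R a b <= eps%:E)%E -> ratr a <= expR eps * ratr b.
Proof.
move=> a0 b0; rewrite /lndist.
have [-> _ | an0] := eqVneq a 0; first by rewrite rmorph0 mulr_ge0 ?expR_ge0 ?ler0q.
have [-> | bn0] /= := eqVneq b 0; first by rewrite leye_eq.
rewrite lee_fin => /ler_normlW lnab.
have ap : 0 < (ratr a : R) by rewrite ltr0q lt_def an0.
have bp : 0 < (ratr b : R) by rewrite ltr0q lt_def bn0.
by rewrite -[X in X <= _](lnK ap) -[X in _ <= _ * X](lnK bp) -expRD ler_expR; lra.
Qed.

Lemma dopt_opt_ratio (R : realType) (eps : R) A B C : (dopt R A B <= eps%:E)%E ->
  ratr (opt A C) <= expR eps * ratr (opt B C) /\
  ratr (opt B C) <= expR eps * ratr (opt A C).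
Proof.
move=> dAB; have lnd : (lndist R (opt A C) (opt B C) <= eps%:E)%E.
  by apply: le_trans dAB; apply: ereal_sup_ubound; exists C.
by split; apply: lndist_le_expR; rewrite ?opt_ge0 // lndistC.
Qed.

Lemma dopt_gap (R : realType) (A B C : struct) (M : nat) (x : rat) :
  (0 < M)%N -> 0 < x -> (dopt R A B <= (ln (1 + M%:R^-1) / 2 : R)%:E)%E ->
  x <= opt A A -> opt B A <= opt B C -> opt A C <= x - x / M%:R -> False.
Proof.
move=> M0 x0 dAB xAA BAC ACx; set y : R := M%:R^-1 in dAB.
have y0 : 0 < y by rewrite invr_gt0 ltr0n.
have [AA_BA _] := dopt_opt_ratio A dAB; have [_ BC_AC] := dopt_opt_ratio C dAB.
set e := expR _ in AA_BA BC_AC; have e0 : 0 < e := expR_gt0 _.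
have ee : e * e = 1 + y by rewrite -expRD -splitr lnK // posrE addr_gt0.
have AC : ratr (opt A C) <= ratr x - ratr x * y :> R.
  by move: ACx; rewrite -(ler_rat R) rmorphB /= fmorph_div /= ratr_nat.
have : ratr x <= (1 + y) * (ratr x - ratr x * y) :> R.
  have xAA' : ratr x <= ratr (opt A A) :> R by rewrite ler_rat.
  have BAC' : ratr (opt B A) <= ratr (opt B C) :> R by rewrite ler_rat.
  rewrite -ee -mulrA; apply: le_trans xAA' (le_trans AA_BA _); rewrite ler_pM2l //.
  by apply: le_trans BAC' (le_trans BC_AC _); rewrite ler_pM2l.
have X0 : 0 < ratr x :> R by rewrite ltr0q.
have Xyy : 0 < ratr x * (y * y) :> R := mulr_gt0 X0 (mulr_gt0 y0 y0).
have -> : (1 + y) * (ratr x - ratr x * y) = ratr x - ratr x * (y * y) :> R by ring.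
lra.
Qed.

Lemma avg_degree_excess (R : realType) (G : graph) (delta : R) q : 0 < delta ->
  2 + delta <= avg_degree R G -> 2 / delta <= q%:R - 1 ->
  [/\ (1 < q)%N, (0 < #|{: gedge G}|)%N & (q * gn G <= (q - 1) * #|{: gedge G}|)%N].
Proof.
move=> d0 avg qd; set n := gn G; set m := #|{: gedge G}|.
have q1 : (1 < q)%N.
  by rewrite -(ltr_nat R); move: qd; have := divr_gt0 (ltr0n R 2) d0; lra.
have n0 : (0 < n)%N.
  (* avg_degree is 0 on the empty graph, by x / 0 = 0 *)
  rewrite lt0n; apply/eqP=> n0; move: avg; rewrite /avg_degree.
  have -> : (gn G)%:R = 0 :> R by rewrite -/n n0.
  by rewrite invr0 mulr0; apply/negP; rewrite -ltNge addr_gt0.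
have nm : (2 + delta) * n%:R <= 2 * m%:R.
  by move: avg; rewrite /avg_degree sum_gdeg ler_pdivlMr ?ltr0n // natrM.
have qd' : 2 <= (q%:R - 1) * delta by rewrite -ler_pdivrMr.
have qn : (q * n <= (q - 1) * m)%N.
  rewrite -(ler_nat R) !natrM natrB ?(ltnW q1) //.
  have q1' : 0 <= q%:R - 1 :> R by rewrite subr_ge0 ler1n ltnW.
  have := ler_wpM2l q1' nm; have := ler_wpM2r (ler0n R n) qd'.
  rewrite mulr1n; lra.
split=> //; rewrite lt0n; apply: contraTneq qn => ->.
by rewrite muln0 -ltnNge muln_gt0 (ltnW q1) n0.
Qed.

Theorem lemma48 (R : realType) (delta : R) (cG : graph -> Prop) :
  0 < delta ->
  (forall G, cG G -> 2 + delta <= avg_degree R G) ->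
  unbounded_girth cG ->
  ~ size_pliable R (orientations_of cG).
Proof.
move=> delta0 avg girth pliable.
pose q := (Num.truncn (2 / delta)).+2.
have q_delta : 2 / delta <= q%:R - 1 :> R.
  have q_trunc : q%:R = (Num.truncn (2 / delta)).+1%:R + 1 :> R by rewrite natr1.
  by have := truncnS_gt (2 / delta); lra.
pose M := (2 * q * (8 * q))%N.
have M0 : (0 < M)%N by rewrite !muln_gt0.
have eps0 : 0 < ln (1 + (M%:R : R)^-1) / 2.
  by rewrite divr_gt0 // ln_gt0 // ltrDl invr_gt0 ltr0n.
have [k close] := pliable _ eps0.
have [G [cG_G girthG]] := girth k.+1.
have [q1 m0 qn] := avg_degree_excess delta0 (avg G cG_G) q_delta.
have [s far] := exists_far_from_Z3_orientation (ltnW q1) m0 qn.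
set A := struct_of_rel (bits_orientation s).
have A_cG : orientations_of cG A.
  exists G; split=> //; exists (bits_orientation s); split=> //.
  exact: bits_orientationP.
have [B [Bk dAB]] := close A A_cG.
apply: (dopt_gap M0 _ dAB (opt_bits_orientation_self s)).
- by rewrite ltr0n.
- exact: opt_le_dicycle3 girthG (bits_orientationP s) _.
- exact: opt_bits_orientation_dicycle3 M0 far.
Qed.
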